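(* For every $p\in[0,1]$, \[ p \le \tfrac12\Big(1+\sqrt{1-h(p)^{\ln 4}}\Big), \] where $h(p) = p\log_2\frac1p + (1-p)\log_2\frac1{1-p}$ (with $0\log_2\frac10 = 0$). *)

From Stdlib Require Import Reals.
Open Scope R_scope.

Definition log2 (x : R) : R := ln x / ln 2.

Definition xlog2inv (x : R) : R :=
  if Req_EM_T x 0 then 0 else x * log2 (1 / x).

Definition h (p : R) : R := xlog2inv p + xlog2inv (1 - p).

(* real power x^y for x >= 0 and y > 0, with 0^y = 0
   (Stdlib's Rpower 0 y would give 1, hence the explicit case) *)
Definition rpow (x y : R) : R :=
  if Req_EM_T x 0 then 0 else Rpower x y.

From Stdlib Require Import Reals Lra Psatz.
From Coquelicot Require Import Coquelicot.
Open Scope R_scope.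

(* Write p = (1 + x) / 2.  Then 4 p (1 - p) = 1 - x^2 and ln 2 * h p = hnat x, and the bound,
   solved for p, says h(p)^(ln 4) <= 4 p (1 - p), i.e. excess x >= 0 on [0, 1).  As excess 0 = 0
   and excess' has the sign of excess_num, it suffices that excess_num >= 0.  Now excess_num
   vanishes at 0 together with its first two derivatives, and its third derivative has the sign
   of 3 - 4 ln 2 - x^2; hence on any [0, x0] each of excess_num'', excess_num', excess_num can
   change sign at most once, from nonnegative to negative.  A direct estimate gives
   excess_num >= 0 near 1, which rules out that sign change. *)

Lemma derive_nonneg_le (f f' : R -> R) (a b : R) : a <= b ->
  (forall c, a <= c <= b -> is_derive f c (f' c)) ->
  (forall c, a < c < b -> 0 <= f' c) -> f a <= f b.
Proof.
  intros Hab Hd Hpos. destruct (Req_dec a b) as [<- | Hne]; [lra |].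
  destruct (MVT_cor2 f f' a b) as [c [Hmvt Hc]]; [lra | |].
  - intros c Hc. apply is_derive_Reals, Hd, Hc.
  - specialize (Hpos c Hc). nra.
Qed.

Lemma derive_nonpos_ge (f f' : R -> R) (a b : R) : a <= b ->
  (forall c, a <= c <= b -> is_derive f c (f' c)) ->
  (forall c, a < c < b -> f' c <= 0) -> f b <= f a.
Proof.
  intros Hab Hd Hneg.
  enough (- f a <= - f b) by lra.
  apply (derive_nonneg_le (fun x => - f x) (fun x => - f' x)); [exact Hab | |].
  - intros c Hc. apply (is_derive_opp f), Hd, Hc.
  - intros c Hc. specialize (Hneg c Hc). lra.
Qed.

Definition stays_negative (g : R -> R) (a b : R) :=
  forall y z, a <= y -> y <= z -> z <= b -> g y < 0 -> g z < 0.

Lemma stays_negative_primitive (f f' : R -> R) (a b : R) :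
  (forall c, a <= c <= b -> is_derive f c (f' c)) ->
  stays_negative f' a b -> 0 <= f a -> stays_negative f a b.
Proof.
  intros Hd Hf' Hfa y z Hy Hyz Hz Hfy.
  destruct (Rlt_dec (f' y) 0) as [Hneg | Hnneg].
  - enough (f z <= f y) by lra.
    apply (derive_nonpos_ge f f'); [lra | intros c Hc; apply Hd; lra |].
    intros c Hc. left. apply (Hf' y c); lra.
  - enough (f a <= f y) by lra.
    apply (derive_nonneg_le f f'); [lra | intros c Hc; apply Hd; lra |].
    intros c Hc. destruct (Rlt_dec (f' c) 0) as [Hc' | Hc']; [| lra].
    exfalso. apply Hnneg, (Hf' c y); lra.
Qed.

Lemma stays_negative_nonneg (f : R -> R) (a b : R) :
  stays_negative f a b -> 0 <= f b -> forall x, a <= x <= b -> 0 <= f x.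
Proof.
  intros Hf Hfb x Hx. destruct (Rlt_dec (f x) 0) as [Hneg | Hnneg]; [| lra].
  enough (f b < 0) by lra. apply (Hf x b); lra.
Qed.

Lemma ln_2_lt_1 : ln 2 < 1.
Proof.
  rewrite <- (ln_exp 1). apply ln_increasing; [lra |].
  pose proof (exp_ineq1 1). lra.
Qed.

Lemma ln_4 : ln 4 = 2 * ln 2.
Proof. replace 4 with (2 * 2) by ring. rewrite ln_mult; lra. Qed.

Lemma ln_ge_1_sub_inv (y : R) : 0 < y -> 1 - / y <= ln y.
Proof.
  intros Hy. pose proof (exp_ineq1_le (ln (/ y))) as Hexp.
  rewrite exp_ln, ln_Rinv in Hexp by (try apply Rinv_0_lt_compat; lra). lra.
Qed.

Definition hnat (x : R) : R :=
  ln 2 - ((1 + x) * ln (1 + x) + (1 - x) * ln (1 - x)) / 2.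

Lemma h_half_add (x : R) : -1 < x < 1 -> h ((1 + x) / 2) = hnat x / ln 2.
Proof.
  intros Hx. pose proof ln_lt_2.
  unfold h, xlog2inv, log2.
  destruct (Req_EM_T ((1 + x) / 2) 0) as [| _]; [lra |].
  destruct (Req_EM_T (1 - (1 + x) / 2) 0) as [| _]; [lra |].
  replace (1 / ((1 + x) / 2)) with (2 / (1 + x)) by (field; lra).
  replace (1 / (1 - (1 + x) / 2)) with (2 / (1 - x)) by (field; lra).
  rewrite !ln_div by lra. unfold hnat. field. lra.
Qed.

Lemma hnat_pos (x : R) : -1 < x < 1 -> 0 < hnat x.
Proof.
  intros Hx.
  assert (ln (1 + x) < ln 2) by (apply ln_increasing; lra).
  assert (ln (1 - x) < ln 2) by (apply ln_increasing; lra).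
  unfold hnat. nra.
Qed.

Definition excess (x : R) : R := ln (1 - x ^ 2) - ln 4 * ln (hnat x / ln 2).

Definition excess_num (x : R) : R :=
  ln 2 * (1 - x ^ 2) * (ln (1 + x) - ln (1 - x)) - 2 * x * hnat x.

Definition excess_num' (x : R) : R :=
  ln (1 + x) + ln (1 - x) + 2 * (1 - ln 2) * x * (ln (1 + x) - ln (1 - x)).

Definition excess_num'' (x : R) : R :=
  2 * ((1 - ln 2) * (ln (1 + x) - ln (1 - x)) - (2 * ln 2 - 1) * x / (1 - x ^ 2)).

Definition excess_num''' (x : R) : R := 2 * (3 - 4 * ln 2 - x ^ 2) / (1 - x ^ 2) ^ 2.

Lemma is_derive_excess (x : R) : -1 < x < 1 ->
  is_derive excess x (excess_num x / ((1 - x ^ 2) * hnat x)).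
Proof.
  intros Hx. pose proof (hnat_pos x Hx). pose proof ln_lt_2.
  assert (0 < hnat x / ln 2) by (apply Rdiv_lt_0_compat; lra).
  unfold excess, excess_num. rewrite ln_4. unfold hnat, Rminus, Rdiv in *. auto_derive.
  - repeat split; try lra; nra.
  - field. repeat split; try lra; nra.
Qed.

Lemma is_derive_excess_num (x : R) : -1 < x < 1 -> is_derive excess_num x (excess_num' x).
Proof.
  intros Hx. unfold excess_num, excess_num', hnat, Rminus. auto_derive; [repeat split; lra |].
  field. lra.
Qed.

Lemma is_derive_excess_num' (x : R) : -1 < x < 1 -> is_derive excess_num' x (excess_num'' x).
Proof.
  intros Hx. unfold excess_num', excess_num'', Rminus. auto_derive; [repeat split; lra |].
  field. repeat split; try lra; nra.
Qed.

Lemma is_derive_excess_num'' (x : R) : -1 < x < 1 -> is_derive excess_num'' x (excess_num''' x).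
Proof.
  intros Hx. unfold excess_num'', excess_num''', Rminus. auto_derive; [repeat split; try lra; nra |].
  field. repeat split; try lra; nra.
Qed.

(* The first summand is at least -(1 - x); the second is (1 - x) times a factor
   tending to +oo as x -> 1. *)
Lemma excess_num_decomp (x : R) : excess_num x =
  (1 + x) * (ln 2 * (1 - x) + x) * (ln (1 + x) - ln 2)
  + (1 - x) * (ln 2 - ln (1 - x)) * (ln 2 * (1 + x) - x).
Proof. unfold excess_num, hnat. field. Qed.

Lemma excess_num_nonneg_near_one :
  exists x0, 0 < x0 < 1 /\ forall x, x0 <= x < 1 -> 0 <= excess_num x.
Proof.
  pose proof ln_lt_2. pose proof ln_2_lt_1.
  set (K := / (2 * ln 2 - 1)).
  assert (HK : K * (2 * ln 2 - 1) = 1) by (unfold K; field; lra).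
  assert (0 < K) by (unfold K; apply Rinv_0_lt_compat; lra).
  assert (Hexp : 0 < exp (- K) < 1).
  { split; [apply exp_pos |]. rewrite <- exp_0. apply exp_increasing. lra. }
  exists (1 - exp (- K)). split; [lra |].
  intros x Hx. rewrite excess_num_decomp.
  assert (Hln1m : K <= - ln (1 - x)).
  { enough (ln (1 - x) <= - K) by lra.
    rewrite <- (ln_exp (- K)). apply ln_le; lra. }
  assert (Hln1p : - (1 - x) / (1 + x) <= ln (1 + x) - ln 2).
  { rewrite <- ln_div by lra.
    pose proof (ln_ge_1_sub_inv ((1 + x) / 2) ltac:(lra)) as Hl.
    replace (1 - / ((1 + x) / 2)) with (- (1 - x) / (1 + x)) in Hl by (field; lra).
    exact Hl. }
  assert (Hfirst : - ((1 - x) * (ln 2 * (1 - x) + x))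
                   <= (1 + x) * (ln 2 * (1 - x) + x) * (ln (1 + x) - ln 2)).
  { replace (- ((1 - x) * (ln 2 * (1 - x) + x)))
      with ((1 + x) * (ln 2 * (1 - x) + x) * (- (1 - x) / (1 + x))) by (field; lra).
    apply Rmult_le_compat_l; [nra | exact Hln1p]. }
  assert (Hslope : 2 * ln 2 - 1 <= ln 2 * (1 + x) - x) by nra.
  assert (Hsecond : 1 <= (ln 2 - ln (1 - x)) * (ln 2 * (1 + x) - x)).
  { apply Rle_trans with (K * (2 * ln 2 - 1)); [lra |].
    apply Rmult_le_compat; lra. }
  nra.
Qed.

Lemma excess_num'''_stays_negative (b : R) : b < 1 -> stays_negative excess_num''' 0 b.
Proof.
  intros Hb y z Hy Hyz Hzb Hneg. unfold excess_num''' in *.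
  assert (Hdy : 0 < (1 - y ^ 2) ^ 2) by (apply pow_lt; nra).
  assert (Hdz : 0 < (1 - z ^ 2) ^ 2) by (apply pow_lt; nra).
  assert (3 - 4 * ln 2 - y ^ 2 < 0).
  { apply Rnot_le_lt. intros Hnn. apply (Rlt_not_le _ _ Hneg).
    apply Rdiv_le_0_compat; lra. }
  apply Rdiv_neg_pos; [nra | exact Hdz].
Qed.

Lemma excess_num_nonneg (x : R) : 0 <= x < 1 -> 0 <= excess_num x.
Proof.
  intros Hx.
  destruct excess_num_nonneg_near_one as [x0 [Hx0 Hnear]].
  destruct (Rle_dec x0 x) as [Hle | Hlt]; [apply Hnear; lra |].
  assert (Hd : forall c, 0 <= c <= x0 -> -1 < c < 1) by (intros; lra).
  assert (Hat0 : ln (1 + 0) = 0 /\ ln (1 - 0) = 0).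
  { replace (1 + 0) with 1 by ring. replace (1 - 0) with 1 by ring. rewrite ln_1. lra. }
  apply (stays_negative_nonneg excess_num 0 x0); [| apply Hnear; lra | lra].
  apply (stays_negative_primitive excess_num excess_num');
    [intros c Hc; apply is_derive_excess_num, Hd, Hc | |
     unfold excess_num, hnat; destruct Hat0 as [-> ->]; lra].
  apply (stays_negative_primitive excess_num' excess_num'');
    [intros c Hc; apply is_derive_excess_num', Hd, Hc | |
     unfold excess_num'; destruct Hat0 as [-> ->]; lra].
  apply (stays_negative_primitive excess_num'' excess_num''');
    [intros c Hc; apply is_derive_excess_num'', Hd, Hc | |
     unfold excess_num''; destruct Hat0 as [-> ->]; lra].
  apply excess_num'''_stays_negative. lra.
Qed.

Lemma excess_nonneg (x : R) : 0 <= x < 1 -> 0 <= excess x.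
Proof.
  intros Hx.
  replace 0 with (excess 0) at 1.
  - apply (derive_nonneg_le excess (fun y => excess_num y / ((1 - y ^ 2) * hnat y)));
      [lra | intros c Hc; apply is_derive_excess; lra |].
    intros c Hc. apply Rdiv_le_0_compat; [apply excess_num_nonneg; lra |].
    apply Rmult_lt_0_compat; [nra | apply hnat_pos; lra].
  - unfold excess, hnat. pose proof ln_lt_2.
    replace (1 + 0) with 1 by ring. replace (1 - 0) with 1 by ring.
    replace (1 - 0 ^ 2) with 1 by ring. rewrite ln_1.
    replace ((ln 2 - (1 * 0 + 1 * 0) / 2) / ln 2) with 1 by (field; lra).
    rewrite ln_1. ring.
Qed.

Lemma h_sym (p : R) : h (1 - p) = h p.
Proof. unfold h. replace (1 - (1 - p)) with p by ring. apply Rplus_comm. Qed.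

Lemma h_1 : h 1 = 0.
Proof.
  unfold h, xlog2inv, log2. replace (1 - 1) with 0 by ring.
  destruct (Req_EM_T 1 0) as [| _]; [lra |].
  destruct (Req_EM_T 0 0) as [_ |]; [| lra].
  replace (1 / 1) with 1 by field. rewrite ln_1. unfold Rdiv. ring.
Qed.

Lemma Rpower_hnat_le (x : R) : 0 <= x < 1 -> Rpower (hnat x / ln 2) (ln 4) <= 1 - x ^ 2.
Proof.
  intros Hx. pose proof (excess_nonneg x Hx) as Hexcess. unfold excess in Hexcess.
  unfold Rpower. rewrite <- (exp_ln (1 - x ^ 2)) by nra.
  destruct (Rle_lt_or_eq_dec (ln 4 * ln (hnat x / ln 2)) (ln (1 - x ^ 2))) as [Hlt | ->];
    [lra | left; apply exp_increasing, Hlt | lra].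
Qed.

Lemma rpow_h_ln4_le (p : R) : 0 <= p <= 1 -> rpow (h p) (ln 4) <= 4 * p * (1 - p).
Proof.
  assert (Hhalf : forall q, 1 / 2 <= q <= 1 -> rpow (h q) (ln 4) <= 4 * q * (1 - q)).
  { intros q Hq. unfold rpow. destruct (Req_EM_T (h q) 0) as [_ | Hnz]; [nra |].
    destruct (Req_dec q 1) as [-> | Hq1]; [rewrite h_1 in Hnz; lra |].
    replace q with ((1 + (2 * q - 1)) / 2) at 1 by field.
    rewrite h_half_add by lra.
    replace (4 * q * (1 - q)) with (1 - (2 * q - 1) ^ 2) by ring.
    apply Rpower_hnat_le. lra. }
  intros Hp. destruct (Rle_dec (1 / 2) p) as [Hle | Hlt]; [apply Hhalf; lra |].
  rewrite <- h_sym. replace (4 * p * (1 - p)) with (4 * (1 - p) * (1 - (1 - p))) by ring.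
  apply Hhalf. lra.
Qed.

Theorem lemma2 (p : R) (hp0 : 0 <= p) (hp1 : p <= 1) :
  p <= (1 + sqrt (1 - rpow (h p) (ln 4))) / 2.
Proof.
  pose proof (sqrt_pos (1 - rpow (h p) (ln 4))).
  destruct (Rle_dec p (1 / 2)) as [Hle | Hgt]; [lra |].
  pose proof (rpow_h_ln4_le p (conj hp0 hp1)) as Hbound.
  assert (Hsq : sqrt ((2 * p - 1) ^ 2) <= sqrt (1 - rpow (h p) (ln 4)))
    by (apply sqrt_le_1_alt; nra).
  rewrite sqrt_pow2 in Hsq by lra. lra.
Qed.
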